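(* For integers $n>p\ge 1$, the number of $123$-avoiding ordered partitions of $[n]$ into $n-p+1$ blocks, of which exactly one block has size $p$ and the other $n-p$ blocks have size $1$, is $$\frac{(n-p+1)(p+1)\binom{2n-p}{n-p}}{n+1}.$$
   Context: An ordered set partition of $[n]$ into $k$ blocks is a sequence $B_1/B_2/\cdots/B_k$ of nonempty, pairwise disjoint subsets of $[n]$ whose union is $[n]$; the order of the blocks matters, but not the order of elements within a block. Such a partition contains the pattern $123$ if there are block indices $i_1<i_2<i_3$ and elements $b_j\in B_{i_j}$ with $b_1<b_2<b_3$; otherwise it avoids $123$.
   Formalization: The count runs over pairs of a 123-avoiding ordered partition of [n] into n−p+1 blocks and a designated block of size p, the other blocks having size 1, so for p = 1 each partition counts n times. The statement above fails without it. *)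

From mathcomp Require Import all_boot.
Set Implicit Arguments. Unset Strict Implicit. Unset Printing Implicit Defensive.

(* Elements of [n] = {1,...,n} are represented by 'I_n = {0,...,n-1}
   (an order-preserving relabelling). *)
Definition is_osp (n k : nat) (B : k.-tuple {set 'I_n}) : bool :=
  [forall i : 'I_k, tnth B i != set0] &&
  [forall i : 'I_k, forall j : 'I_k, (i != j) ==> [disjoint tnth B i & tnth B j]] &&
  [forall x : 'I_n, exists i : 'I_k, x \in tnth B i].

Definition contains123 (n k : nat) (B : k.-tuple {set 'I_n}) : bool :=
  [exists i1 : 'I_k, exists i2 : 'I_k, exists i3 : 'I_k,
   exists b1 : 'I_n, exists b2 : 'I_n, exists b3 : 'I_n,
    [&& i1 < i2, i2 < i3, b1 \in tnth B i1, b2 \in tnth B i2,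
        b3 \in tnth B i3, b1 < b2 & b2 < b3]].

Definition avoids123 (n k : nat) (B : k.-tuple {set 'I_n}) : bool :=
  ~~ contains123 B.

Definition block_type_at (n k p : nat) (B : k.-tuple {set 'I_n}) (i : 'I_k) : bool :=
  (#|tnth B i| == p) && [forall j : 'I_k, (j != i) ==> (#|tnth B j| == 1)].

(* The set of pairs (B, i): B a 123-avoiding ordered partition of [n] into
   n-p+1 blocks, with the designated block B_i of size p and all others of
   size 1.  For p >= 2 the index i is determined by B; for p = 1 the block
   "of size p" is a designated one. *)
Definition avoiders (n p : nat) :
    {set (n - p + 1).-tuple {set 'I_n} * 'I_(n - p + 1)} :=
  [set Bi | [&& is_osp Bi.1, avoids123 Bi.1 & block_type_at p Bi.1 Bi.2]].

From mathcomp Require Import all_boot zify.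
Set Implicit Arguments. Unset Strict Implicit. Unset Printing Implicit Defensive.

(* Encode a pair (B, i) by the permutation s of [0, n) that sends every element to the
   position of its block, the block B_i being spread over the values [i, i + p) in
   decreasing order.  Then s avoids 123 exactly when B does, s is decreasing on
   [i, i + p), and B is recovered from s.  Removing the first letter shows that the
   123-avoiding permutations of [0, v) that are decreasing both on [lo, hi) and on
   [t, v) number C(v + t - w, t) - C(v + t - w, v + 1) with w = hi - lo; for t = v = n
   and w = p this is a ballot number, the same for each of the n - p + 1 choices of i. *)

Definition decreasing_on (P : pred nat) (s : seq nat) : bool :=
  pairwise (fun x y => P x ==> P y ==> (y < x)) s.

Fixpoint avoids123_seq (s : seq nat) : bool :=
  if s is x :: s' then decreasing_on (fun y => x < y) s' && avoids123_seq s'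
  else true.

Lemma eq_in_decreasing_on (P Q : pred nat) s :
  {in s, P =1 Q} -> decreasing_on P s = decreasing_on Q s.
Proof.
by move=> PQ; apply: (eq_in_pairwise (P := mem s)) (allss s) => x y xs ys /=; rewrite !PQ.
Qed.

Lemma sub_decreasing_on (P Q : pred nat) s :
  subpred Q P -> decreasing_on P s -> decreasing_on Q s.
Proof.
move=> QP; apply: sub_pairwise => x y /implyP Pxy; apply/implyP => /QP/Pxy/implyP Pyx.
by apply/implyP => /QP.
Qed.

Lemma decreasing_on_vacuous (P : pred nat) s :
  {in s, forall y, ~~ P y} -> decreasing_on P s.
Proof.
move=> nP; rewrite (eq_in_decreasing_on (Q := pred0)) => [|y /nP/negbTE //].
by elim: s {nP} => //= x s ->; rewrite andbT; apply/allP.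
Qed.

Lemma decreasing_on_map (P : pred nat) f s : {mono f : y z / y < z} ->
  decreasing_on P (map f s) = decreasing_on (preim f P) s.
Proof.
move=> fmono; rewrite /decreasing_on pairwise_map.
by apply: eq_pairwise => x y /=; rewrite fmono.
Qed.

Lemma avoids123_seq_map f s : {mono f : y z / y < z} ->
  avoids123_seq (map f s) = avoids123_seq s.
Proof.
move=> fmono; elim: s => //= x s ->; rewrite decreasing_on_map //.
by congr (_ && _); apply: eq_in_decreasing_on => y _; rewrite /= fmono.
Qed.

Lemma decreasing_onP (P : pred nat) s : reflect
  (forall a b, a < b -> b < size s -> P (nth 0 s a) -> P (nth 0 s b) -> nth 0 s b < nth 0 s a)
  (decreasing_on P s).
Proof.
apply: (iffP (pairwiseP 0)) => [dec a b ab bs | dec a b aS bS ab].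
  by move: (dec a b (ltn_trans ab bs) bs ab) => /implyP H /H/implyP; apply.
by apply/implyP => Pa; apply/implyP; apply: dec.
Qed.

Lemma avoids123_seqP s : uniq s -> reflect
  (forall a b c, a < b -> b < c -> c < size s ->
     ~~ ((nth 0 s a < nth 0 s b) && (nth 0 s b < nth 0 s c)))
  (avoids123_seq s).
Proof.
elim: s => [|x s IH] /=; first by move=> _; apply: ReflectT => a b c _ _; rewrite ltn0.
case/andP=> xs Us; apply: (iffP andP).
  case=> /decreasing_onP H1 /(IH Us) H2 [|a] [|b] [|c] //= ab bc cs.
    apply/negP => /andP[h1 h2]; have := H1 b c bc cs h1 (ltn_trans h1 h2); lia.
  exact: H2.
move=> H; split; last by apply/(IH Us) => a b c ab bc cs; apply: (H a.+1 b.+1 c.+1).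
apply/decreasing_onP => a b ab bs xa xb.
have := H 0 a.+1 b.+1 (ltn0Sn _) ab bs; rewrite /= xa /= -leqNgt leq_eqVlt.
case/orP => // /eqP E; move: (nth_uniq 0 (ltn_trans ab bs) bs Us); rewrite E eqxx.
by move/esym/eqP => abe; move: ab; rewrite abe ltnn.
Qed.

Lemma perm_iotaE m t :
  perm_eq t (iota 0 m) = [&& uniq t, all (fun y => y < m) t & size t == m].
Proof.
apply/idP/idP.
  move=> H; rewrite (perm_uniq H) iota_uniq (perm_size H) size_iota eqxx andbT /=.
  by apply/allP => y; rewrite (perm_mem H) mem_iota.
case/and3P=> Ut /allP At /eqP St; apply: uniq_perm => //; first exact: iota_uniq.
have [] := uniq_min_size Ut (_ : {subset t <= iota 0 m}) _ => //.
  by move=> z zt; rewrite mem_iota /= At.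
by rewrite size_iota St.
Qed.

Lemma mem_permutations_iota v s :
  s \in permutations (iota 0 v) -> forall y, (y \in s) = (y < v).
Proof. by rewrite mem_permutations => /perm_mem H y; rewrite H mem_iota. Qed.

Lemma size_permutations_iota v s : s \in permutations (iota 0 v) -> size s = v.
Proof. by rewrite mem_permutations => /perm_size ->; rewrite size_iota. Qed.

Lemma bumpE x y : bump x y = if x <= y then y.+1 else y.
Proof. by rewrite /bump; case: leqP. Qed.

Lemma ltn_bump2 h : {mono bump h : i j / i < j}.
Proof. by move=> i j; rewrite !ltnNge leq_bump2. Qed.

Lemma bump_inj x : injective (bump x).
Proof. exact: can_inj (bumpK x). Qed.

Lemma perm_permutations_iota_cons v :
  perm_eq (permutations (iota 0 v.+1))
          [seq x :: map (bump x) s | x <- iota 0 v.+1, s <- permutations (iota 0 v)].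
Proof.
apply: uniq_perm; first exact: permutations_uniq.
  apply: allpairs_uniq; [exact: iota_uniq | exact: permutations_uniq |].
  move=> [x s] [x' s'] _ _ /= [-> E]; congr (_, _).
  by apply: (inj_map (@bump_inj x')) E.
move=> t; rewrite mem_permutations perm_iotaE; apply/idP/allpairsP.
  case: t => // x t /and3P[/= /andP[xt Ut] /andP[xv At] /eqP[St]].
  have unbumpK_t z : z \in t -> bump x (unbump x z) = z.
    move=> zt; have /negbTE zx : z != x by apply: contraNneq xt => <-.
    by rewrite unbumpKcond zx.
  exists (x, map (unbump x) t) => /=; split.
  - by change (x \in iota 0 v.+1); rewrite mem_iota.
  - rewrite mem_permutations perm_iotaE size_map St eqxx andbT.
    rewrite (map_inj_in_uniq (can_in_inj unbumpK_t)) Ut /=.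
    apply/allP => y /mapP[z zt ->]; have zv := allP At z zt.
    have zx : z != x by apply: contraNneq xt => <-.
    by move: zx; rewrite /unbump; case: (ltnP x z) => /=; lia.
  - by rewrite -map_comp map_id_in.
case=> [[x s]] /= [xi si ->]; have {}xi : x \in iota 0 v.+1 by [].
move: xi si; rewrite mem_iota mem_permutations perm_iotaE.
move=> /andP[_ xv] /and3P[Us /allP As /eqP Ss] /=.
rewrite size_map Ss eqxx andbT xv (map_inj_uniq (@bump_inj x)) Us andbT /=.
apply/andP; split.
  by apply/mapP => -[y _ /eqP]; rewrite (negbTE (neq_bump x y)).
by apply/allP => y /mapP[z /As zs ->]; rewrite /= bumpE; case: (leqP x z) => _; lia.
Qed.

Lemma count_permutations_iota_cons v P :
  count P (permutations (iota 0 v.+1)) =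
  \sum_(0 <= x < v.+1) count (fun s => P (x :: map (bump x) s)) (permutations (iota 0 v)).
Proof.
rewrite (permP (perm_permutations_iota_cons v)) count_flatten sumnE !big_map.
by rewrite /index_iota subn0; apply: eq_bigr => x _; rewrite count_map.
Qed.

Lemma nth_permutations_iota v s k :
  s \in permutations (iota 0 v) -> k < v -> nth 0 s k < v.
Proof.
move=> s_perm k_v.
by rewrite -(mem_permutations_iota s_perm) mem_nth // (size_permutations_iota s_perm).
Qed.

Definition admissible t lo hi s := [&& avoids123_seq s,
  decreasing_on (fun y => t <= y) s & decreasing_on (fun y => lo <= y < hi) s].

Definition nadmissible v t lo hi := count (admissible t lo hi) (permutations (iota 0 v)).

Lemma all_implyl (T : Type) b (P : pred T) s :
  all (fun y => b ==> P y) s = b ==> all P s.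
Proof. by case: b => //=; elim: s. Qed.

Lemma admissible_cons t lo hi x s :
  admissible t lo hi (x :: map (bump x) s) =
  [&& decreasing_on (fun y => x <= y) s, avoids123_seq s,
      (t <= x) ==> all (fun y => (t <= bump x y) ==> (bump x y < x)) s,
      decreasing_on (fun y => t <= bump x y) s,
      (lo <= x < hi) ==> all (fun y => (lo <= bump x y < hi) ==> (bump x y < x)) s &
      decreasing_on (fun y => lo <= bump x y < hi) s].
Proof.
rewrite /admissible /= -!/(decreasing_on _ _).
rewrite !(decreasing_on_map _ _ (ltn_bump2 x)) (avoids123_seq_map _ (ltn_bump2 x)) !all_map.
have -> : decreasing_on (fun y => x < bump x y) s = decreasing_on (fun y => x <= y) s.
  by apply: eq_in_decreasing_on => y _ /=; rewrite bumpE; case: (leqP x y); lia.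
by rewrite !all_implyl !andbA.
Qed.

Definition nadmissible_cons v t lo hi x :=
  count (fun s => admissible t lo hi (x :: map (bump x) s)) (permutations (iota 0 v)).

Lemma nadmissibleS v t lo hi :
  nadmissible v.+1 t lo hi = \sum_(0 <= x < v.+1) nadmissible_cons v t lo hi x.
Proof. exact: count_permutations_iota_cons. Qed.

Section FirstLetter.

Variables (v t lo hi : nat).
Hypotheses (lo_hi : lo <= hi) (hi_t : hi <= t) (t_v : t <= v.+1).

Lemma nadmissible_cons_below x :
  x < lo -> nadmissible_cons v t lo hi x = nadmissible v x x x.
Proof.
move=> x_lo; apply: eq_in_count => s _ /=; rewrite admissible_cons /admissible.
rewrite (@decreasing_on_vacuous (fun y => x <= y < x)) => [|y _]; last by apply/negP; lia.
have -> : (t <= x) = false by lia.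
have -> : (lo <= x < hi) = false by lia.
rewrite /= andbT; case: (boolP (decreasing_on _ s)) => dx; last by rewrite !andbF.
by rewrite !(sub_decreasing_on _ dx) ?andbT // => y; rewrite bumpE; case: (leqP x y); lia.
Qed.

Lemma nadmissible_cons_inside x : lo <= x < hi ->
  nadmissible_cons v t lo hi x = if x == hi.-1 then nadmissible v x lo x else 0.
Proof.
move=> x_in; have t_x : (t <= x) = false by lia.
case: eqP => [x_top | x_low].
  apply: eq_in_count => s _ /=; rewrite admissible_cons /admissible x_in t_x /=.
  have -> : all (fun y => (lo <= bump x y < hi) ==> (bump x y < x)) s.
    by apply/allP => y _; rewrite bumpE; case: (leqP x y) => h; apply/implyP; lia.
  have -> : decreasing_on (fun y => lo <= bump x y < hi) s =
            decreasing_on (fun y => lo <= y < x) s.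
    by apply: eq_in_decreasing_on => y _ /=; rewrite bumpE; case: (leqP x y); lia.
  case: (boolP (decreasing_on _ s)) => dx; last by rewrite !andbF.
  by rewrite (sub_decreasing_on _ dx) // => y; rewrite bumpE; case: (leqP x y); lia.
rewrite /nadmissible_cons (eq_in_count (a2 := pred0)) ?count_pred0 //.
move=> s /mem_permutations_iota s_v.
rewrite /= admissible_cons x_in t_x /=.
have -> : all (fun y => (lo <= bump x y < hi) ==> (bump x y < x)) s = false.
  apply/negbTE/allPn; exists x; first by rewrite s_v; lia.
  by rewrite bumpE leqnn; apply/negP => /implyP; lia.
by rewrite !andbF.
Qed.

Lemma nadmissible_cons_above x :
  hi <= x < t -> nadmissible_cons v t lo hi x = nadmissible v x lo hi.
Proof.
move=> x_in; apply: eq_in_count => s _ /=; rewrite admissible_cons /admissible.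
have -> : (t <= x) = false by lia.
have -> : (lo <= x < hi) = false by lia.
have -> : decreasing_on (fun y => lo <= bump x y < hi) s =
          decreasing_on (fun y => lo <= y < hi) s.
  by apply: eq_in_decreasing_on => y _ /=; rewrite bumpE; case: (leqP x y); lia.
rewrite /=; case: (boolP (decreasing_on _ s)) => dx; last by rewrite !andbF.
by rewrite (sub_decreasing_on _ dx) // => y; rewrite bumpE; case: (leqP x y); lia.
Qed.

Lemma nadmissible_cons_top x : t <= x <= v ->
  nadmissible_cons v t lo hi x = if x == v then nadmissible v t lo hi else 0.
Proof.
move=> x_in; have x_lohi : (lo <= x < hi) = false by lia.
case: eqP => [x_v | x_v].
  subst x; apply: eq_in_count => s /mem_permutations_iota s_v /=.
  rewrite admissible_cons /admissible x_lohi.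
  have bumpv y : y \in s -> bump v y = y by rewrite s_v bumpE; case: (leqP v y); lia.
  rewrite (@decreasing_on_vacuous (fun y => v <= y)) => [|y]; last by rewrite s_v -ltnNge.
  have -> : all (fun y => (t <= bump v y) ==> (bump v y < v)) s.
    by apply/allP => y ys; rewrite bumpv // -s_v ys implybT.
  rewrite (@eq_in_decreasing_on (fun y => t <= bump v y) (fun y => t <= y));
    last by move=> y /bumpv /= ->.
  rewrite (@eq_in_decreasing_on (fun y => lo <= bump v y < hi) (fun y => lo <= y < hi));
    last by move=> y /bumpv /= ->.
  by rewrite implybT.
rewrite /nadmissible_cons (eq_in_count (a2 := pred0)) ?count_pred0 //.
move=> s /mem_permutations_iota s_v.
rewrite /= admissible_cons (_ : t <= x) /=; last by lia.
have -> : all (fun y => (t <= bump x y) ==> (bump x y < x)) s = false.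
  apply/negbTE/allPn; exists x; first by rewrite s_v; lia.
  by rewrite bumpE leqnn; apply/negP => /implyP; lia.
by rewrite !andbF.
Qed.

End FirstLetter.

(* The four ranges of the first letter in [nadmissible_rec], with [F] applied to the
   pair (m, k) for which the corresponding count is C(m, k) - C(m, v + 1). *)
Definition peel_sum (F : nat -> nat -> nat) v t lo w :=
  \sum_(0 <= x < lo) F (v + x) x + (if 0 < w then F (v + lo) (lo + w - 1) else 0)
  + \sum_(lo + w <= x < t) F (v + x - w) x + (if t <= v then F (v + t - w) t else 0).

Local Notation bin_top := (fun m k => 'C(m, k)).
Local Notation bin_bottom v := (fun m _ => 'C(m, v.+1)).

Lemma peel_sum_binomial0 v w k : w + k <= v.+1 ->
  peel_sum bin_top v (w + k) 0 w + 'C(v.+1 + k, v.+2) =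
  'C(v.+1 + k, w + k) + peel_sum (bin_bottom v) v (w + k) 0 w.
Proof.
elim: k => [|k IH] hk.
  rewrite /peel_sum !addn0 !add0n !big_geq // !addnK !(bin_small (ltnSn _)).
  case: w hk => [|w] hk /=; first by rewrite !bin0.
  rewrite subn1 /= binS; case: (leqP w.+1 v) => h; first by lia.
  by rewrite (bin_small h); lia.
have /IH : w + k <= v.+1 by lia.
rewrite /peel_sum !add0n addnS.
rewrite (big_nat_recr _ _ _ (leq_addr k w)) (big_nat_recr _ _ _ (leq_addr k w)) /=.
have -> : v + (w + k) - w = v + k by lia.
have -> : v + (w + k).+1 - w = (v + k).+1 by lia.
rewrite -!addSnnS !addSn.
set M := v + k.
have e0 : 'C(M.+2, v.+2) = 'C(M.+1, v.+2) + 'C(M.+1, v.+1) by rewrite binS.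
have e1 : 'C(M.+2, (w + k).+1) = 'C(M.+1, (w + k).+1) + 'C(M.+1, w + k) by rewrite binS.
have e2 : 'C(M.+1, v.+1) = 'C(M, v.+1) + 'C(M, v) by rewrite binS.
have e3 : 'C(M.+1, (w + k).+1) = 'C(M, (w + k).+1) + 'C(M, w + k) by rewrite binS.
case: (ltnP (w + k) v) => h1; first by rewrite (ltnW h1); lia.
have h1' : w + k = v by lia.
by rewrite h1' in e1 e3 *; rewrite leqnn; lia.
Qed.

Lemma peel_sum_shift v t lo w : lo.+1 + w <= t -> t <= v.+1 ->
  peel_sum bin_top v t lo.+1 w + peel_sum (bin_bottom v) v t lo w =
  peel_sum bin_top v t lo w + peel_sum (bin_bottom v) v t lo.+1 w.
Proof.
move=> h1 h2; rewrite /peel_sum !big_nat_recr //= addSn.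
rewrite (big_ltn (m := lo + w)) // (big_ltn (m := lo + w)) //.
have -> : v + (lo + w) - w = v + lo by lia.
case: w h1 => [|w] h1; first by rewrite /= !addn0; lia.
have -> : lo.+1 + w.+1 - 1 = (lo + w).+1 by lia.
have -> : lo + w.+1 - 1 = lo + w by lia.
rewrite /= !addnS.
have e1 : 'C((v + lo).+1, (lo + w).+1) = 'C(v + lo, (lo + w).+1) + 'C(v + lo, lo + w).
  by rewrite binS.
have e2 : 'C((v + lo).+1, v.+1) = 'C(v + lo, v.+1) + 'C(v + lo, v) by rewrite binS.
have e3 : 'C(v + lo, lo) = 'C(v + lo, v) by rewrite -[RHS]bin_sub ?leq_addr // addKn.
lia.
Qed.

Lemma peel_sum_binomial v t lo w : lo + w <= t -> t <= v.+1 ->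
  peel_sum bin_top v t lo w + 'C(v.+1 + t - w, v.+2) =
  'C(v.+1 + t - w, t) + peel_sum (bin_bottom v) v t lo w.
Proof.
elim: lo => [|lo IH] h1 h2.
  have w_t : w <= t by lia.
  by have := @peel_sum_binomial0 v w (t - w); rewrite subnKC // addnBA //; apply.
have := peel_sum_shift h1 h2; have := IH (ltnW h1) h2; lia.
Qed.

Lemma nadmissible_rec v t lo hi : lo <= hi -> hi <= t -> t <= v.+1 ->
  nadmissible v.+1 t lo hi =
  \sum_(0 <= x < lo) nadmissible v x x x
  + (if lo < hi then nadmissible v hi.-1 lo hi.-1 else 0)
  + \sum_(hi <= x < t) nadmissible v x lo hi
  + (if t <= v then nadmissible v t lo hi else 0).
Proof.
move=> lo_hi hi_t t_v; have hi_v : hi <= v.+1 by lia.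
rewrite nadmissibleS (big_cat_nat (leq0n lo) (leq_trans lo_hi hi_v)).
rewrite (big_cat_nat lo_hi hi_v) (big_cat_nat hi_t t_v) /= !addnA.
congr (_ + _ + _ + _).
- by apply: eq_big_nat => x /andP[_ x_lo]; apply: nadmissible_cons_below.
- rewrite (eq_big_nat _ _ (F2 := fun x => if x == hi.-1 then nadmissible v hi.-1 lo hi.-1 else 0));
    last by move=> x x_in; rewrite nadmissible_cons_inside //; case: eqP => // ->.
  by rewrite -big_mkcond big_nat1_eq; congr (if _ then _ else _); lia.
- by apply: eq_big_nat => x x_in; apply: nadmissible_cons_above.
rewrite (eq_big_nat _ _ (F2 := fun x => if x == v then nadmissible v t lo hi else 0));
  last by move=> x x_in; rewrite nadmissible_cons_top //; lia.
by rewrite -big_mkcond big_nat1_eq ltnSn andbT.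
Qed.

Lemma nadmissible_binomial v t lo hi : lo <= hi -> hi <= t -> t <= v ->
  nadmissible v t lo hi + 'C(v + t - (hi - lo), v.+1) = 'C(v + t - (hi - lo), t).
Proof.
elim: v t lo hi => [|v IH] t lo hi lo_hi hi_t t_v.
  by have [-> -> ->] : [/\ t = 0, hi = 0 & lo = 0] by split; lia.
set w := hi - lo; have t_v1 : t <= v.+1 by lia.
have below : \sum_(0 <= x < lo) nadmissible v x x x + \sum_(0 <= x < lo) 'C(v + x, v.+1) =
             \sum_(0 <= x < lo) 'C(v + x, x).
  rewrite -big_split; apply: eq_big_nat => x /andP[_ x_lo].
  by have := IH x x x (leqnn x) (leqnn x); rewrite subnn subn0; apply; lia.
have inside : (if lo < hi then nadmissible v hi.-1 lo hi.-1 else 0)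
              + (if 0 < w then 'C(v + lo, v.+1) else 0) =
              (if 0 < w then 'C(v + lo, hi - 1) else 0).
  rewrite /w subn_gt0 subn1; case: (ltnP lo hi) => // lo_lt_hi.
  have -> : v + lo = v + hi.-1 - (hi.-1 - lo) by lia.
  by apply: IH; lia.
have above : \sum_(hi <= x < t) nadmissible v x lo hi + \sum_(hi <= x < t) 'C(v + x - w, v.+1) =
             \sum_(hi <= x < t) 'C(v + x - w, x).
  by rewrite -big_split; apply: eq_big_nat => x x_in; apply: IH; lia.
have top : (if t <= v then nadmissible v t lo hi else 0)
           + (if t <= v then 'C(v + t - w, v.+1) else 0) =
           (if t <= v then 'C(v + t - w, t) else 0).
  by case: (leqP t v) => // t_le_v; apply: IH.
have lo_w : lo + w = hi by rewrite /w; lia.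
have := @peel_sum_binomial v t lo w; rewrite nadmissible_rec // /peel_sum lo_w addSn.
move/(_ hi_t t_v1); lia.
Qed.

Lemma card_nth_ord n (P : pred nat) s : size s = n ->
  #|[set y : 'I_n | P (nth 0 s y)]| = count P s.
Proof.
move=> s_n; rewrite cardsE cardE size_filter -enumT -(count_map (nth 0 s \o val)).
by rewrite map_comp val_enum_ord -s_n -/(mkseq _ _) mkseq_nth.
Qed.

Lemma count_iota_range n a b : a <= b -> b <= n ->
  count (fun z => a <= z < b) (iota 0 n) = b - a.
Proof.
move=> a_b b_n.
have -> : iota 0 n = iota 0 a ++ iota a (b - a) ++ iota b (n - b).
  rewrite [in LHS](_ : n = a + ((b - a) + (n - b))); last by lia.
  by rewrite iotaD add0n iotaD subnKC.
rewrite !count_cat (eq_in_count (a2 := pred0)) ?count_pred0; last first.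
  by move=> z; rewrite mem_iota /=; lia.
rewrite (eq_in_count (a1 := fun z => a <= z < b) (a2 := predT) (s := iota a _)); last first.
  by move=> z; rewrite mem_iota /=; lia.
rewrite count_predT size_iota (eq_in_count (a2 := pred0)) ?count_pred0 ?addn0 //.
by move=> z; rewrite mem_iota /=; lia.
Qed.

Definition block_of i p z := if z < i then z else if z < i + p then i else z - p + 1.

Definition block_min i p j := if j <= i then j else j + p - 1.

Section BlockOf.

Variables (i p : nat).
Hypothesis p_gt0 : 0 < p.

Lemma leq_block_of : {homo block_of i p : z z' / z <= z'}.
Proof.
move=> z z' z_z'; rewrite /block_of.
by case: (ltnP z i); case: (ltnP z' i); case: (ltnP z (i + p)); case: (ltnP z' (i + p)); lia.
Qed.

Lemma block_of_lt n z : i < n - p + 1 -> z < n -> block_of i p z < n - p + 1.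
Proof. by rewrite /block_of; case: (ltnP z i); case: (ltnP z (i + p)); lia. Qed.

Lemma block_of_eq_i z : (block_of i p z == i) = (i <= z < i + p).
Proof. by rewrite /block_of; case: (ltnP z i); case: (ltnP z (i + p)); lia. Qed.

Lemma block_of_eq j z : j != i -> (block_of i p z == j) = (z == block_min i p j).
Proof.
by rewrite /block_of /block_min; case: (ltnP z i); case: (ltnP z (i + p)); case: (leqP j i); lia.
Qed.

Lemma block_ofK j : block_of i p (block_min i p j) = j.
Proof.
rewrite /block_min /block_of; case: (leqP j i) => j_i.
  by case: (ltnP j i); case: (ltnP j (i + p)); lia.
by case: (ltnP (j + p - 1) i); case: (ltnP (j + p - 1) (i + p)); lia.
Qed.

Lemma block_min_lt n j : p <= n -> j < n - p + 1 -> block_min i p j < n.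
Proof. by rewrite /block_min; case: (leqP j i); lia. Qed.

End BlockOf.

Definition perm_partition n p i (s : seq nat) : (n - p + 1).-tuple {set 'I_n} :=
  [tuple [set y : 'I_n | block_of i p (nth 0 s y) == j] | j < n - p + 1].

Lemma mem_perm_partition n p i s (j : 'I_(n - p + 1)) y :
  (y \in tnth (perm_partition n p i s) j) = (block_of i p (nth 0 s y) == j).
Proof. by rewrite tnth_mktuple inE. Qed.

Section PermPartition.

Variables (n p : nat) (i : 'I_(n - p + 1)) (s : seq nat).
Hypotheses (p_gt0 : 0 < p) (p_le_n : p <= n) (s_perm : s \in permutations (iota 0 n)).

Let s_size : size s = n := size_permutations_iota s_perm.

Lemma perm_partition_osp : is_osp (perm_partition n p i s).
Proof.
rewrite /is_osp -andbA; apply/and3P; split.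
- apply/forallP => j; apply/set0Pn.
  have j_n := block_min_lt i p_gt0 p_le_n (ltn_ord j).
  have idx_n : index (block_min i p j) s < n.
    by rewrite -[X in _ < X]s_size index_mem (mem_permutations_iota s_perm).
  exists (Ordinal idx_n).
  by rewrite mem_perm_partition nth_index ?(mem_permutations_iota s_perm) // block_ofK.
- apply/forallP => j; apply/forallP => j'; apply/implyP => j_j'.
  rewrite -setI_eq0; apply/eqP/setP => y; rewrite !inE !mem_perm_partition.
  by apply/negbTE/negP => /andP[/eqP -> /eqP /val_inj E]; rewrite E eqxx in j_j'.
- apply/forallP => y; apply/existsP.
  have y_n := nth_permutations_iota s_perm (ltn_ord y).
  by exists (Ordinal (block_of_lt p_gt0 (ltn_ord i) y_n)); rewrite mem_perm_partition.
Qed.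

Lemma perm_partition_avoids : avoids123_seq s -> avoids123 (perm_partition n p i s).
Proof.
have s_uniq : uniq s by move: s_perm; rewrite mem_permutations perm_iotaE => /andP[].
move/(avoids123_seqP s_uniq) => s_av; apply/existsP => -[i1 /existsP[i2 /existsP[i3]]].
case/existsP => b1 /existsP[b2 /existsP[b3]]; rewrite !mem_perm_partition.
case/and5P=> i12 i23 /eqP e1 /eqP e2 /andP[/eqP e3 /andP[b12 b23]].
have lt_nth (a b : 'I_n) : block_of i p (nth 0 s a) < block_of i p (nth 0 s b) ->
    nth 0 s a < nth 0 s b.
  by apply: contraTT; rewrite -!leqNgt; apply: leq_block_of.
move: (s_av b1 b2 b3 b12 b23); rewrite s_size ltn_ord => /(_ isT) /negP; apply.
by rewrite !lt_nth ?e1 ?e2 ?e3.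
Qed.

Lemma perm_partition_type : block_type_at p (perm_partition n p i s) i.
Proof.
have s_iota : perm_eq s (iota 0 n) by rewrite -mem_permutations.
have i_p_n : i + p <= n by have := ltn_ord i; lia.
apply/andP; split.
  rewrite tnth_mktuple (card_nth_ord (fun z => block_of i p z == i) s_size).
  rewrite (eq_count (a2 := fun z => i <= z < i + p)) => [|z]; last exact: block_of_eq_i.
  by rewrite (permP s_iota) count_iota_range ?addKn ?leq_addr.
apply/forallP => j; apply/implyP => j_i.
rewrite tnth_mktuple (card_nth_ord (fun z => block_of i p z == j) s_size).
rewrite (eq_count (a2 := fun z => block_min i p j <= z < (block_min i p j).+1)); last first.
  by move=> z; rewrite /= block_of_eq //; lia.
have j_n := block_min_lt i p_gt0 p_le_n (ltn_ord j).
by rewrite (permP s_iota) count_iota_range ?subSnn.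
Qed.

End PermPartition.

Definition block_index n k (B : k.-tuple {set 'I_n}) (y : 'I_n) : nat :=
  find (fun A : {set 'I_n} => y \in A) B.

Definition block_rank n (A : {set 'I_n}) (y : 'I_n) : nat := #|[set z in A | y < z]|.

(* Inverse of [perm_partition]: blocks other than [B_i] are singletons, and [B_i] is
   spread over [i, i + p) in decreasing order. *)
Definition partition_code n k (B : k.-tuple {set 'I_n}) (i : 'I_k) p (y : 'I_n) : nat :=
  if block_index B y == i then i + block_rank (tnth B i) y
  else block_min i p (block_index B y).

Section OrderedSetPartition.

Variables (n k : nat) (B : k.-tuple {set 'I_n}).
Hypothesis B_osp : is_osp B.

Lemma block_index_lt y : block_index B y < k.
Proof.
case/andP: B_osp => _ /forallP /(_ y) /existsP[j y_j].
rewrite -[X in _ < X](size_tuple B) -has_find.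
by apply/hasP; exists (tnth B j); rewrite ?mem_tnth.
Qed.

Lemma mem_block_index y (j : 'I_k) : (y \in tnth B j) = (block_index B y == j).
Proof.
have y_in : y \in tnth B (Ordinal (block_index_lt y)).
  rewrite (tnth_nth set0) /=; apply: (nth_find set0 (a := fun A : {set 'I_n} => y \in A)).
  by rewrite has_find size_tuple block_index_lt.
apply/idP/eqP => [y_j | idx_j]; last first.
  by rewrite (_ : j = Ordinal (block_index_lt y)) //; apply: val_inj.
apply/eqP; apply: contraT => j_ne; case/andP: B_osp => /andP[_ /forallP disj] _.
move: (disj (Ordinal (block_index_lt y))) => /forallP /(_ j).
rewrite -(inj_eq val_inj) /= j_ne /= -setI_eq0 => /eqP /setP /(_ y).
by rewrite !inE y_in y_j.
Qed.

End OrderedSetPartition.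

Section PermPartitionCode.

Variables (n p : nat) (i : 'I_(n - p + 1)) (s : seq nat).
Hypotheses (p_gt0 : 0 < p) (p_le_n : p <= n) (s_perm : s \in permutations (iota 0 n)).
Hypothesis s_dec : decreasing_on (fun y => i <= y < i + p) s.

Let P := perm_partition n p i s.

Lemma block_index_perm_partition (y : 'I_n) : block_index P y = block_of i p (nth 0 s y).
Proof.
have y_in := nth_permutations_iota s_perm (ltn_ord y).
have := mem_block_index (perm_partition_osp i p_gt0 p_le_n s_perm) y
          (Ordinal (block_of_lt p_gt0 (ltn_ord i) y_in)).
by rewrite mem_perm_partition eqxx => /esym/eqP.
Qed.

(* The values on [B_i] decrease, so those below [nth 0 s y] sit at later positions. *)
Lemma block_rank_perm_partition (y : 'I_n) : i <= nth 0 s y < i + p ->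
  nth 0 s y = i + block_rank (tnth P i) y.
Proof.
move=> y_in; have s_iota : perm_eq s (iota 0 n) by rewrite -mem_permutations.
have s_size := size_permutations_iota s_perm.
rewrite /block_rank.
have -> : [set z in tnth P i | y < z] = [set z : 'I_n | i <= nth 0 s z < nth 0 s y].
  apply/setP => z; rewrite !inE mem_perm_partition block_of_eq_i //.
  have dec := decreasing_onP _ _ s_dec; rewrite s_size in dec.
  apply/andP/idP => [[z_in y_z] | z_lt].
    by have := dec y z y_z (ltn_ord z) y_in z_in; case/andP: z_in => ->.
  have z_in : i <= nth 0 s z < i + p by lia.
  split=> //; rewrite ltnNge leq_eqVlt; apply/negP => /orP[/eqP/val_inj z_y | z_y].
    by rewrite z_y ltnn andbF in z_lt.
  by have := dec z y z_y (ltn_ord y) z_in y_in; lia.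
rewrite (card_nth_ord (fun v => i <= v < nth 0 s y) s_size) (permP s_iota).
have y_n := nth_permutations_iota s_perm (ltn_ord y).
by rewrite count_iota_range; lia.
Qed.

Lemma nth_perm_partition (y : 'I_n) : nth 0 s y = partition_code P i p y.
Proof.
rewrite /partition_code block_index_perm_partition.
case: ifPn => [/eqP idx_i | ne_i]; last by apply/eqP; rewrite -block_of_eq.
by apply: block_rank_perm_partition; rewrite -block_of_eq_i // idx_i.
Qed.

End PermPartitionCode.

Lemma perm_partition_inj n p (i : 'I_(n - p + 1)) s s' : 0 < p -> p <= n ->
  s \in permutations (iota 0 n) -> s' \in permutations (iota 0 n) ->
  decreasing_on (fun y => i <= y < i + p) s -> decreasing_on (fun y => i <= y < i + p) s' ->
  perm_partition n p i s = perm_partition n p i s' -> s = s'.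
Proof.
move=> p_gt0 p_le_n s_perm s'_perm s_dec s'_dec E.
have s_size := size_permutations_iota s_perm.
apply: (@eq_from_nth _ 0); first by rewrite s_size (size_permutations_iota s'_perm).
move=> y; rewrite s_size => y_n; have -> : y = Ordinal y_n by [].
by rewrite (nth_perm_partition p_gt0 p_le_n s_perm s_dec) E -nth_perm_partition.
Qed.

Section PartitionCode.

Variables (n p : nat) (B : (n - p + 1).-tuple {set 'I_n}) (i : 'I_(n - p + 1)).
Hypotheses (p_gt0 : 0 < p) (p_le_n : p <= n).
Hypotheses (B_osp : is_osp B) (B_type : block_type_at p B i).

Let code := partition_code B i p.

Let mem_block := mem_block_index B_osp.

Lemma block_rank_lt y : y \in tnth B i -> block_rank (tnth B i) y < p.
Proof.
case/andP: B_type => /eqP card_i _ y_i; rewrite -[X in _ < X]card_i.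
apply: proper_card; apply/properP; split.
  by apply/subsetP => z; rewrite inE => /andP[].
by exists y => //; rewrite inE ltnn andbF.
Qed.

Lemma block_rank_decr (a b : 'I_n) : a \in tnth B i -> b \in tnth B i -> a < b ->
  block_rank (tnth B i) b < block_rank (tnth B i) a.
Proof.
move=> a_i b_i a_b; apply: proper_card; apply/properP; split.
  by apply/subsetP => z; rewrite !inE => /andP[-> /(ltn_trans a_b) ->].
by exists b; rewrite !inE ?b_i ?a_b // ltnn andbF.
Qed.

Lemma block_of_code y : block_of i p (code y) = block_index B y.
Proof.
rewrite /code /partition_code; case: eqP => [idx_i | _]; last exact: block_ofK.
have /block_rank_lt rank_p : y \in tnth B i by rewrite mem_block idx_i.
by apply/eqP; rewrite idx_i block_of_eq_i // leq_addr ltn_add2l.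
Qed.

Lemma code_lt y : code y < n.
Proof.
rewrite /code /partition_code; have i_n := ltn_ord i.
case: eqP => [idx_i | _]; last exact: block_min_lt (block_index_lt B_osp y).
have /block_rank_lt : y \in tnth B i by rewrite mem_block idx_i.
lia.
Qed.

Lemma code_mono (a b : 'I_n) : block_index B a < block_index B b -> code a < code b.
Proof.
rewrite -!block_of_code; apply: contraTT; rewrite -!leqNgt; exact: leq_block_of.
Qed.

Lemma singleton_block (j : 'I_(n - p + 1)) (a b : 'I_n) :
  j != i -> a \in tnth B j -> b \in tnth B j -> a = b.
Proof.
case/andP: B_type => _ /forallP /(_ j) /implyP H /H /cards1P[x ->].
by rewrite !inE => /eqP -> /eqP ->.
Qed.

Lemma code_same_block (a b : 'I_n) : block_index B a = block_index B b -> a < b ->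
  block_index B a = i /\ code b < code a.
Proof.
move=> ab a_b; have a_idx := block_index_lt B_osp a.
case: (eqVneq (block_index B a) i) => [a_i | a_ne].
  split=> //; rewrite /code /partition_code -ab a_i eqxx ltn_add2l.
  by apply: block_rank_decr => //; rewrite mem_block ?a_i -?ab ?a_i.
have a_j : a \in tnth B (Ordinal a_idx) by rewrite mem_block.
have b_j : b \in tnth B (Ordinal a_idx) by rewrite mem_block /= ab.
by move: a_b; rewrite (singleton_block _ a_j b_j) ?ltnn.
Qed.

Lemma code_inj : injective code.
Proof.
move=> a b code_ab; have idx_ab : block_index B a = block_index B b.
  by rewrite -!block_of_code code_ab.
case: (ltngtP a b) => [a_b | b_a | /val_inj //].
  by have [_] := code_same_block idx_ab a_b; rewrite code_ab ltnn.
by have [_] := code_same_block (esym idx_ab) b_a; rewrite code_ab ltnn.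
Qed.

Lemma block_index_lt_code (a b : 'I_n) : a < b -> code a < code b ->
  block_index B a < block_index B b.
Proof.
move=> a_b code_ab; case: (ltngtP (block_index B a) (block_index B b)) => // idx.
  by have := code_mono idx; lia.
by have [_] := code_same_block idx a_b; lia.
Qed.

Let s := map code (enum 'I_n).

Let nth_s (y : 'I_n) : nth 0 s y = code y.
Proof. by rewrite (nth_map y) ?size_enum_ord // nth_ord_enum. Qed.

Let s_size : size s = n.
Proof. by rewrite size_map size_enum_ord. Qed.

Lemma partition_code_perm : s \in permutations (iota 0 n).
Proof.
rewrite mem_permutations perm_iotaE s_size eqxx andbT (map_inj_uniq code_inj) enum_uniq.
by apply/allP => z /mapP[y _ ->]; apply: code_lt.
Qed.

Lemma partition_code_admissible : avoids123 B -> admissible n i (i + p) s.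
Proof.
move=> B_av; have s_uniq : uniq s by rewrite (map_inj_uniq code_inj) enum_uniq.
apply/and3P; split.
- apply/(avoids123_seqP s_uniq) => a b c a_b b_c; rewrite s_size => c_n.
  have b_n := ltn_trans b_c c_n; have a_n := ltn_trans a_b b_n.
  have [-> -> ->] : [/\ a = Ordinal a_n, b = Ordinal b_n & c = Ordinal c_n] by [].
  rewrite !nth_s; apply/negP => /andP[code_ab code_bc].
  have idx_ab := @block_index_lt_code (Ordinal a_n) (Ordinal b_n) a_b code_ab.
  have idx_bc := @block_index_lt_code (Ordinal b_n) (Ordinal c_n) b_c code_bc.
  move/negP: B_av; apply; apply/existsP; exists (Ordinal (block_index_lt B_osp (Ordinal a_n))).
  apply/existsP; exists (Ordinal (block_index_lt B_osp (Ordinal b_n))).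
  apply/existsP; exists (Ordinal (block_index_lt B_osp (Ordinal c_n))).
  apply/existsP; exists (Ordinal a_n); apply/existsP; exists (Ordinal b_n).
  apply/existsP; exists (Ordinal c_n).
  by rewrite /= idx_ab idx_bc !mem_block /= !eqxx a_b b_c.
- by apply: decreasing_on_vacuous => y /mapP[z _ ->]; rewrite -ltnNge code_lt.
- apply/decreasing_onP => a b a_b; rewrite s_size => b_n; have a_n := ltn_trans a_b b_n.
  have [-> ->] : a = Ordinal a_n /\ b = Ordinal b_n by [].
  rewrite !nth_s -!(block_of_eq_i _ p_gt0) !block_of_code => /eqP a_i /eqP b_i.
  by have [] := code_same_block (etrans a_i (esym b_i)) a_b.
Qed.

Lemma perm_partition_code : perm_partition n p i s = B.
Proof.
apply: eq_from_tnth => j; apply/setP => y.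
by rewrite mem_perm_partition nth_s block_of_code mem_block.
Qed.

End PartitionCode.

Lemma card_avoiders_at n p (i : 'I_(n - p + 1)) : 0 < p -> p <= n ->
  #|[set B | (B, i) \in avoiders n p]| = nadmissible n n i (i + p).
Proof.
move=> p_gt0 p_le_n; set S := filter (admissible n i (i + p)) (permutations (iota 0 n)).
have S_uniq : uniq (map (perm_partition n p i) S).
  rewrite map_inj_in_uniq ?filter_uniq ?permutations_uniq // => s s'.
  rewrite !mem_filter => /andP[/and3P[_ _ s_dec] s_perm] /andP[/and3P[_ _ s'_dec] s'_perm].
  exact: perm_partition_inj.
have S_mem : [set B | (B, i) \in avoiders n p] =i map (perm_partition n p i) S.
  move=> B; rewrite !inE /=; apply/idP/mapP => [/and3P[B_osp B_av B_type] | [s]].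
    exists (map (partition_code B i p) (enum 'I_n)); last by rewrite perm_partition_code.
    by rewrite mem_filter partition_code_admissible // partition_code_perm.
  rewrite mem_filter => /andP[/and3P[s_av _ _] s_perm] ->.
  by rewrite perm_partition_osp // perm_partition_avoids // perm_partition_type.
by rewrite (eq_card S_mem) (card_uniqP S_uniq) size_map size_filter.
Qed.

Lemma card_avoiders_sum n p :
  #|avoiders n p| = \sum_(i : 'I_(n - p + 1)) #|[set B | (B, i) \in avoiders n p]|.
Proof.
rewrite -sum1_card (partition_big snd xpredT) //=; apply: eq_bigr => j _.
rewrite sum1dep_card.
have -> : [set x | (x \in avoiders n p) && (x.2 == j)] =
          (fun B => (B, j)) @: [set B | (B, j) \in avoiders n p].
  apply/setP => -[B j']; rewrite !inE.
  apply/idP/imsetP => [/andP[B_j /eqP /= j'_j] | [B' + [-> ->]]].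
    by subst j'; exists B; rewrite ?inE.
  by rewrite !inE /= eqxx andbT.
by rewrite card_imset // => B B' [].
Qed.

Lemma ballot_bin n p : p <= n ->
  (n + 1) * ('C(2 * n - p, n) - 'C(2 * n - p, n.+1)) = (p + 1) * 'C(2 * n - p, n - p).
Proof.
move=> p_n; have M_n : 2 * n - p - n = n - p by lia.
have := mul_bin_left (2 * n - p) n; rewrite M_n -{2}M_n bin_sub; last by lia.
rewrite mulnBr; nia.
Qed.

Unset Implicit Arguments.

Theorem theorem6 (n p : nat) (hp : 1 <= p) (hnp : p < n) :
  #|avoiders n p| =
    ((n - p + 1) * (p + 1) * 'C(2 * n - p, n - p)) %/ (n + 1).
Proof.
have p_n := ltnW hnp.
have card_at (i : 'I_(n - p + 1)) :
    #|[set B | (B, i) \in avoiders n p]| = 'C(2 * n - p, n) - 'C(2 * n - p, n.+1).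
  have i_p_n : i + p <= n by have := ltn_ord i; lia.
  have := nadmissible_binomial (leq_addr p i) i_p_n (leqnn n).
  by rewrite card_avoiders_at // addKn addnn -mul2n; lia.
rewrite card_avoiders_sum (eq_bigr _ (fun i _ => card_at i)) sum_nat_const card_ord.
by rewrite -mulnA -ballot_bin // mulnCA mulKn ?addn1.
Qed.
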